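(* For all $t\in\mathbb N$ we have $M_t=(0,0,\tfrac12,-\tfrac12,0,0)^T$ and \[ V_{2t}=\frac12\begin{pmatrix}1&1&0&0&0&0\\1&1&0&0&0&0\\1&1&0&0&0&0\\0&0&1&1&0&0\\0&0&1&1&0&0\\0&0&1&1&0&0\end{pmatrix}V_t+\frac14\begin{pmatrix}0\\0\\1\\4\\1\\9\end{pmatrix},\qquad V_{2t+1}=\frac12\begin{pmatrix}0&0&1&1&0&0\\0&0&1&1&0&0\\0&0&1&1&0&0\\0&0&0&0&1&1\\0&0&0&0&1&1\\0&0&0&0&1&1\end{pmatrix}V_t+\frac14\begin{pmatrix}1\\9\\4\\1\\0\\0\end{pmatrix}, \] with $V_0=\frac14(0,0,1,9,6,14)^T$.
   Context: Let $\mathsf r(n)$ be the number of (overlapping) occurrences of $\mathtt{11}$ in the binary expansion of $n\in\mathbb N=\{0,1,\dots\}$, and $d(t,n)=\mathsf r(n+t)-\mathsf r(n)$. Let $a_t(k)$, $b_t(k)$ ($k\in\mathbb Z$) be the asymptotic densities (which exist and define probability distributions on $\mathbb Z$) of $\{n:d(t,2n)=k\}$ and $\{n:d(t,2n+1)=k\}$. Let $m_t^\alpha=\sum_k k a_t(k)$, $m_t^\beta=\sum_k k b_t(k)$, $v_t^\alpha=\sum_k(k-m_t^\alpha)^2a_t(k)$, $v_t^\beta=\sum_k(k-m_t^\beta)^2b_t(k)$, and $M_t=(m^\alpha_{2t},m^\beta_{2t},m^\alpha_{2t+1},m^\beta_{2t+1},m^\alpha_{2t+2},m^\beta_{2t+2})^T$,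 $V_t=(v^\alpha_{2t},v^\beta_{2t},v^\alpha_{2t+1},v^\beta_{2t+1},v^\alpha_{2t+2},v^\beta_{2t+2})^T$. *)

From Stdlib Require Import Reals ZArith Arith List Bool.
From Coquelicot Require Import Coquelicot.
Open Scope R_scope.

Definition r (n : nat) : nat :=
  length (filter (fun i => andb (Nat.testbit n i) (Nat.testbit n (S i)))
                 (seq 0 (S (Nat.log2 n)))).

Definition d (t n : nat) : Z := (Z.of_nat (r (n + t)) - Z.of_nat (r n))%Z.

Definition density (P : nat -> bool) : R :=
  real (Lim_seq (fun N => INR (length (filter P (seq 0 N))) / INR N)).

Definition a (t : nat) (k : Z) : R := density (fun n => Z.eqb (d t (2 * n)) k).
Definition b (t : nat) (k : Z) : R := density (fun n => Z.eqb (d t (2 * n + 1)) k).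

(* Sum over k in Z of f k, computed as f 0 + sum_{j>=1} (f j + f (-j)).
   For the absolutely summable families occurring here this is the usual sum. *)
Definition zsum (f : Z -> R) : R :=
  Series (fun j : nat => if (Nat.eqb j 0) then f 0%Z
                         else f (Z.of_nat j) + f (- Z.of_nat j)%Z).

Definition m_alpha (t : nat) : R := zsum (fun k => IZR k * a t k).
Definition m_beta  (t : nat) : R := zsum (fun k => IZR k * b t k).
Definition v_alpha (t : nat) : R := zsum (fun k => (IZR k - m_alpha t) ^ 2 * a t k).
Definition v_beta  (t : nat) : R := zsum (fun k => (IZR k - m_beta t) ^ 2 * b t k).

Definition Mvec (t : nat) (i : nat) : R :=
  match i with
  | 0 => m_alpha (2 * t) | 1 => m_beta (2 * t)
  | 2 => m_alpha (2 * t + 1) | 3 => m_beta (2 * t + 1)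
  | 4 => m_alpha (2 * t + 2) | _ => m_beta (2 * t + 2)
  end.
Definition Vvec (t : nat) (i : nat) : R :=
  match i with
  | 0 => v_alpha (2 * t) | 1 => v_beta (2 * t)
  | 2 => v_alpha (2 * t + 1) | 3 => v_beta (2 * t + 1)
  | 4 => v_alpha (2 * t + 2) | _ => v_beta (2 * t + 2)
  end.

Definition Mat0 (i j : nat) : R :=
  if Nat.ltb i 3 then (if Nat.ltb j 2 then 1 else 0)
  else (if orb (Nat.eqb j 2) (Nat.eqb j 3) then 1 else 0).
Definition Mat1 (i j : nat) : R :=
  if Nat.ltb i 3 then (if orb (Nat.eqb j 2) (Nat.eqb j 3) then 1 else 0)
  else (if orb (Nat.eqb j 4) (Nat.eqb j 5) then 1 else 0).
Definition mv (A : nat -> nat -> R) (v : nat -> R) (i : nat) : R :=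
  sum_f_R0 (fun j => A i j * v j) 5.
Definition vec6 (x0 x1 x2 x3 x4 x5 : R) (i : nat) : R :=
  match i with 0 => x0 | 1 => x1 | 2 => x2 | 3 => x3 | 4 => x4 | _ => x5 end.

From Stdlib Require Import Reals ZArith List Bool Lia Lra FunctionalExtensionality.
From Coquelicot Require Import Coquelicot.
Open Scope R_scope.

(* Write t = 2s + e and n = 2m + g with bits e, g, and put s' = s + [e = f = 1].  Comparing
   the lowest bits of 2n + f and 2n + f + t shows that d(t, 2n + f) - d(s', n) depends only on
   e, f, g and the parity of s'.  Since densities of interleaved sequences average, the law of
   d(t, 2n + f) is the equal mixture, over g, of translates of the laws for s'; thus a_t and
   b_t are determined recursively from a_0 = b_0 = the point mass at 0.  A translate has the
   shifted mean and the same variance; an equal mixture has the average mean and, by the law of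
   total variance, the average variance plus the square of half the difference of the means.
   Induction then gives the means (0 for even t, +-1/2 for odd t) and the variance recursion.
   The one self-referential case is b_1(k) = (a_1(k) + b_1(k+1))/2: as d(1, n) <= 1, b_1
   vanishes above 1 and decays geometrically below, so it has a finite second moment, and its
   mass and mean are solved from that same equation. *)

(** * Lowest bits and the block count *)

Lemma length_filter_map_S (f : nat -> bool) (l : list nat) :
  length (filter f (map S l)) = length (filter (fun i => f (S i)) l).
Proof. induction l as [|x l IH]; simpl; [reflexivity|]. destruct (f (S x)); simpl; auto. Qed.

Lemma r_double_add (n : nat) (b : bool) :
  r (2 * n + Nat.b2n b) = (r n + Nat.b2n (b && Nat.odd n))%nat.
Proof.
  destruct (Nat.eq_dec n 0) as [->|Hn]; [destruct b; reflexivity|].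
  unfold r.
  replace (Nat.log2 (2 * n + Nat.b2n b)) with (S (Nat.log2 n))
    by (destruct b; simpl Nat.b2n;
        [rewrite Nat.log2_succ_double | rewrite Nat.add_0_r, Nat.log2_double]; lia).
  rewrite <- cons_seq, <- seq_shift. cbn [filter].
  rewrite Nat.testbit_0_r, Nat.testbit_succ_r, Nat.bit0_odd.
  destruct (b && Nat.odd n); cbn [length Nat.b2n]; rewrite length_filter_map_S;
    rewrite (filter_ext _ (fun i => Nat.testbit n i && Nat.testbit n (S i)))
      by (intro i; now rewrite !Nat.testbit_succ_r); lia.
Qed.

Lemma r_double_addZ (n : nat) (b : bool) :
  Z.of_nat (r (2 * n + Nat.b2n b)) = (Z.of_nat (r n) + Z.b2z (b && Nat.odd n))%Z.
Proof. rewrite r_double_add. destruct (b && Nat.odd n); simpl; lia. Qed.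

Lemma d_double_add (t n : nat) (e f : bool) :
  d (2 * t + Nat.b2n e) (2 * n + Nat.b2n f) =
  (d (t + Nat.b2n (e && f)) n + Z.b2z (xorb e f && Nat.odd (n + (t + Nat.b2n (e && f))))
   - Z.b2z (f && Nat.odd n))%Z.
Proof.
  unfold d.
  replace (2 * n + Nat.b2n f + (2 * t + Nat.b2n e))%nat
    with (2 * (n + (t + Nat.b2n (e && f))) + Nat.b2n (xorb e f))%nat
    by (destruct e, f; simpl; lia).
  rewrite !r_double_addZ. lia.
Qed.

(** * Sums over Z *)

Definition summable (f : Z -> R) : Prop :=
  ex_series (fun n => f (Z.of_nat n)) /\ ex_series (fun n => f (- Z.of_nat n)%Z).

Lemma zsum_split (f : Z -> R) : summable f ->
  zsum f = Series (fun n => f (Z.of_nat n)) + Series (fun n => f (- Z.of_nat n)%Z) - f 0%Z.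
Proof.
  intros [Hpos Hneg]. apply ex_series_incr_1 in Hpos, Hneg.
  assert (Htail : ex_series (fun n => f (Z.of_nat (S n)) + f (- Z.of_nat (S n))%Z))
    by (apply (ex_series_plus _ _ Hpos Hneg)).
  unfold zsum. rewrite Series_incr_1 by (apply ex_series_incr_1; exact Htail).
  rewrite (Series_incr_1 (fun n => f (Z.of_nat n))) by (apply ex_series_incr_1; exact Hpos).
  rewrite (Series_incr_1 (fun n => f (- Z.of_nat n)%Z)) by (apply ex_series_incr_1; exact Hneg).
  simpl Nat.eqb. cbv iota beta. rewrite (Series_plus _ _ Hpos Hneg). simpl. ring.
Qed.

Lemma zsum_ext (f g : Z -> R) : (forall k, f k = g k) -> zsum f = zsum g.
Proof. intro H. apply Series_ext. intro n. now rewrite !H. Qed.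

Lemma summable_ext (f g : Z -> R) : (forall k, f k = g k) -> summable f -> summable g.
Proof.
  intros H [Hp Hn]. split; [eapply ex_series_ext; [|exact Hp] | eapply ex_series_ext; [|exact Hn]];
    intro n; apply H.
Qed.

Lemma summable_plus (f g : Z -> R) :
  summable f -> summable g -> summable (fun k => f k + g k).
Proof.
  intros [Hfp Hfn] [Hgp Hgn].
  split; [exact (ex_series_plus _ _ Hfp Hgp) | exact (ex_series_plus _ _ Hfn Hgn)].
Qed.

Lemma summable_scal (c : R) (f : Z -> R) : summable f -> summable (fun k => c * f k).
Proof.
  intros [Hp Hn]. split; [exact (ex_series_scal_l c _ Hp) | exact (ex_series_scal_l c _ Hn)].
Qed.

Lemma summable_dominated (f g : Z -> R) :
  (forall k, Rabs (f k) <= g k) -> summable g -> summable f.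
Proof.
  intros H [Hp Hn].
  split; [refine (ex_series_le (V := R_CompleteNormedModule) _ _ _ Hp)
         | refine (ex_series_le (V := R_CompleteNormedModule) _ _ _ Hn)]; intro n; apply H.
Qed.

Lemma zsum_plus (f g : Z -> R) : summable f -> summable g ->
  zsum (fun k => f k + g k) = zsum f + zsum g.
Proof.
  intros [Hfp Hfn] [Hgp Hgn].
  rewrite !zsum_split by (try apply summable_plus; split; assumption).
  rewrite !Series_plus by assumption. ring.
Qed.

Lemma zsum_scal (c : R) (f : Z -> R) : zsum (fun k => c * f k) = c * zsum f.
Proof.
  unfold zsum. rewrite <- Series_scal_l. apply Series_ext. intro n.
  destruct (Nat.eqb n 0); ring.
Qed.

Lemma summable_reflect (f : Z -> R) : summable f -> summable (fun k => f (- k)%Z).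
Proof.
  intros [Hp Hn]. split; [exact Hn|].
  eapply ex_series_ext; [|exact Hp]. intro n. now rewrite Z.opp_involutive.
Qed.

Lemma zsum_reflect (f : Z -> R) : zsum (fun k => f (- k)%Z) = zsum f.
Proof.
  apply Series_ext. intro n. rewrite Z.opp_involutive.
  destruct (Nat.eqb n 0); simpl; ring.
Qed.

Lemma zsum_shift_one (f : Z -> R) : summable f ->
  summable (fun k => f (k + 1)%Z) /\ zsum (fun k => f (k + 1)%Z) = zsum f.
Proof.
  intros [Hp Hn].
  assert (Hp' : ex_series (fun n => f (Z.of_nat n + 1)%Z)).
  { apply ex_series_incr_1 in Hp. eapply ex_series_ext; [|exact Hp].
    intro n. cbv beta. f_equal. lia. }
  assert (Hn' : ex_series (fun n => f (- Z.of_nat n + 1)%Z)).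
  { apply ex_series_incr_1. eapply ex_series_ext; [|exact Hn].
    intro n. cbv beta. f_equal. lia. }
  split; [split; assumption|].
  rewrite !zsum_split by (split; assumption).
  rewrite (Series_incr_1 _ Hp), (Series_incr_1 _ Hn').
  rewrite (Series_ext (fun n => f (Z.of_nat n + 1)%Z) (fun n => f (Z.of_nat (S n))))
    by (intro n; f_equal; lia).
  rewrite (Series_ext (fun n => f (- Z.of_nat (S n) + 1)%Z) (fun n => f (- Z.of_nat n)%Z))
    by (intro n; f_equal; lia).
  simpl. ring.
Qed.

Lemma summable_zsum_ext (f g : Z -> R) (l : R) :
  (forall k, f k = g k) -> summable f /\ zsum f = l -> summable g /\ zsum g = l.
Proof.
  intros H [Hs Hz]. split; [exact (summable_ext _ _ H Hs)|].
  rewrite <- Hz. apply zsum_ext. intro k. now rewrite H.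
Qed.

Lemma zsum_shift (c : Z) (f : Z -> R) : summable f ->
  summable (fun k => f (k - c)%Z) /\ zsum (fun k => f (k - c)%Z) = zsum f.
Proof.
  assert (Hnat : forall (n : nat) g, summable g ->
            summable (fun k => g (k + Z.of_nat n)%Z) /\
            zsum (fun k => g (k + Z.of_nat n)%Z) = zsum g).
  { induction n as [|n IH]; intros g Hg.
    - apply (summable_zsum_ext g); [intro k; f_equal; lia | split; [exact Hg | reflexivity]].
    - destruct (IH g Hg) as [Hs Hz]. rewrite <- Hz.
      apply (summable_zsum_ext (fun k => g (k + 1 + Z.of_nat n)%Z)); [intro k; f_equal; lia|].
      exact (zsum_shift_one _ Hs). }
  intro Hf. destruct (Z.le_ge_cases c 0) as [Hc|Hc].
  - apply (summable_zsum_ext (fun k => f (k + Z.of_nat (Z.to_nat (- c)))%Z));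
      [intro k; f_equal; lia | exact (Hnat _ f Hf)].
  - set (n := Z.of_nat (Z.to_nat c)).
    destruct (Hnat (Z.to_nat c) _ (summable_reflect f Hf)) as [Hs Hz]. fold n in Hs, Hz.
    rewrite <- (zsum_reflect f), <- Hz.
    apply (summable_zsum_ext (fun k => f (- (- k + n))%Z)); [intro k; f_equal; unfold n; lia|].
    split; [exact (summable_reflect _ Hs) | exact (zsum_reflect (fun k => f (- (k + n))%Z))].
Qed.

(** * Distributions on Z: translates and mixtures *)

Definition shift (c : Z) (p : Z -> R) (k : Z) : R := p (k - c)%Z.
Definition mix (p q : Z -> R) (k : Z) : R := (p k + q k) / 2.

Definition mean (p : Z -> R) : R := zsum (fun k => IZR k * p k).
Definition moment2 (p : Z -> R) : R := zsum (fun k => IZR k ^ 2 * p k).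
Definition variance (p : Z -> R) : R := zsum (fun k => (IZR k - mean p) ^ 2 * p k).

Definition l2_distribution (p : Z -> R) : Prop :=
  (forall k, 0 <= p k) /\ summable p /\ summable (fun k => IZR k ^ 2 * p k) /\ zsum p = 1.

Lemma summable_quadratic (p : Z -> R) (x y z : R) : l2_distribution p ->
  summable (fun k => (x * IZR k ^ 2 + y * IZR k + z) * p k).
Proof.
  intros (Hpos & H0 & H2 & _).
  assert (H1 : summable (fun k => IZR k * p k)).
  { apply (summable_dominated _ (fun k => p k + IZR k ^ 2 * p k));
      [|apply summable_plus; assumption].
    intro k. specialize (Hpos k). rewrite Rabs_mult, (Rabs_pos_eq (p k)) by assumption.
    assert (Rabs (IZR k) <= 1 + IZR k ^ 2) by (destruct (Rle_dec 0 (IZR k));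
      [rewrite Rabs_pos_eq | rewrite Rabs_left]; nra).
    nra. }
  eapply summable_ext;
    [|exact (summable_plus _ _ (summable_scal x _ H2)
               (summable_plus _ _ (summable_scal y _ H1) (summable_scal z _ H0)))].
  intro k. cbv beta. ring.
Qed.

Lemma zsum_quadratic (p : Z -> R) (x y z : R) : l2_distribution p ->
  zsum (fun k => (x * IZR k ^ 2 + y * IZR k + z) * p k) = x * moment2 p + y * mean p + z.
Proof.
  intro Hp. pose proof (summable_quadratic p 0 1 0 Hp) as H1.
  destruct Hp as (_ & H0 & H2 & Hmass).
  assert (H1' : summable (fun k => IZR k * p k))
    by (eapply summable_ext; [|exact H1]; intro k; cbv beta; ring).
  rewrite (zsum_ext _ (fun k => x * (IZR k ^ 2 * p k) + (y * (IZR k * p k) + z * p k)))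
    by (intro k; cbv beta; ring).
  rewrite zsum_plus;
    [|apply summable_scal; exact H2 | apply summable_plus; apply summable_scal; assumption].
  rewrite zsum_plus by (apply summable_scal; assumption).
  rewrite !zsum_scal, Hmass. unfold moment2, mean. ring.
Qed.

Lemma variance_moment2 (p : Z -> R) : l2_distribution p -> variance p = moment2 p - mean p ^ 2.
Proof.
  intro Hp. unfold variance.
  rewrite (zsum_ext _ (fun k => (1 * IZR k ^ 2 + (- 2 * mean p) * IZR k + mean p ^ 2) * p k))
    by (intro k; cbv beta; ring).
  rewrite zsum_quadratic by assumption. ring.
Qed.

Lemma zsum_shift_quadratic (p : Z -> R) (c : Z) (x y z : R) : l2_distribution p ->
  zsum (fun k => (x * IZR k ^ 2 + y * IZR k + z) * shift c p k)
  = zsum (fun k => (x * IZR (k + c) ^ 2 + y * IZR (k + c) + z) * p k).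
Proof.
  intro Hp.
  assert (Hs : summable (fun k => (x * IZR (k + c) ^ 2 + y * IZR (k + c) + z) * p k)).
  { eapply summable_ext; [|exact (summable_quadratic p x (2 * x * IZR c + y)
                                     (x * IZR c ^ 2 + y * IZR c + z) Hp)].
    intro k. rewrite plus_IZR. ring. }
  rewrite <- (proj2 (zsum_shift c _ Hs)). apply zsum_ext. intro k.
  unfold shift. now rewrite Z.sub_add.
Qed.

Lemma l2_distribution_shift (p : Z -> R) (c : Z) :
  l2_distribution p -> l2_distribution (shift c p).
Proof.
  intros Hp. pose proof Hp as (Hpos & H0 & H2 & Hmass).
  assert (H2c : summable (fun k => (IZR (k + c) ^ 2) * p k)).
  { eapply summable_ext; [|exact (summable_quadratic p 1 (2 * IZR c) (IZR c ^ 2) Hp)].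
    intro k. rewrite plus_IZR. ring. }
  split; [intro k; apply Hpos|]. split; [exact (proj1 (zsum_shift c p H0))|]. split.
  - eapply summable_ext; [|exact (proj1 (zsum_shift c _ H2c))].
    intro k. cbv beta. unfold shift. now rewrite Z.sub_add.
  - unfold shift. rewrite (proj2 (zsum_shift c p H0)). exact Hmass.
Qed.

Lemma mean_shift (p : Z -> R) (c : Z) : l2_distribution p -> mean (shift c p) = mean p + IZR c.
Proof.
  intro Hp. unfold mean.
  rewrite (zsum_ext _ (fun k => (0 * IZR k ^ 2 + 1 * IZR k + 0) * shift c p k))
    by (intro k; cbv beta; ring).
  rewrite zsum_shift_quadratic by assumption.
  rewrite (zsum_ext _ (fun k => (0 * IZR k ^ 2 + 1 * IZR k + IZR c) * p k))
    by (intro k; rewrite plus_IZR; ring).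
  rewrite zsum_quadratic by assumption. unfold mean. ring.
Qed.

Lemma variance_shift (p : Z -> R) (c : Z) : l2_distribution p -> variance (shift c p) = variance p.
Proof.
  intro Hp. unfold variance at 1. rewrite mean_shift by assumption.
  rewrite (zsum_ext _ (fun k => (1 * IZR k ^ 2 + (- 2 * (mean p + IZR c)) * IZR k
                                   + (mean p + IZR c) ^ 2) * shift c p k))
    by (intro k; cbv beta; ring).
  rewrite zsum_shift_quadratic by assumption. unfold variance. apply zsum_ext.
  intro k. rewrite plus_IZR. ring.
Qed.

Lemma summable_mix (p q : Z -> R) : summable p -> summable q -> summable (mix p q).
Proof.
  intros Hp Hq. eapply summable_ext;
    [|exact (summable_plus _ _ (summable_scal (/ 2) _ Hp) (summable_scal (/ 2) _ Hq))].
  intro k. unfold mix. field.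
Qed.

Lemma zsum_mix (p q : Z -> R) : summable p -> summable q ->
  zsum (mix p q) = (zsum p + zsum q) / 2.
Proof.
  intros Hp Hq. unfold mix.
  rewrite (zsum_ext _ (fun k => / 2 * p k + / 2 * q k)) by (intro k; field).
  rewrite zsum_plus by (apply summable_scal; assumption). rewrite !zsum_scal. field.
Qed.

Lemma mul_mix (g p q : Z -> R) (k : Z) :
  g k * mix p q k = mix (fun k => g k * p k) (fun k => g k * q k) k.
Proof. unfold mix. field. Qed.

Lemma l2_distribution_mix (p q : Z -> R) :
  l2_distribution p -> l2_distribution q -> l2_distribution (mix p q).
Proof.
  intros (Pp & P0 & P2 & Pm) (Qp & Q0 & Q2 & Qm).
  split; [intro k; unfold mix; specialize (Pp k); specialize (Qp k); lra|].
  split; [apply summable_mix; assumption|].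
  split.
  { eapply summable_ext; [|exact (summable_mix _ _ P2 Q2)].
    intro k. symmetry. apply (mul_mix (fun k => IZR k ^ 2)). }
  rewrite zsum_mix, Pm, Qm by assumption. field.
Qed.

Lemma mean_mix (p q : Z -> R) : l2_distribution p -> l2_distribution q ->
  mean (mix p q) = (mean p + mean q) / 2.
Proof.
  intros Hp Hq. unfold mean. rewrite (zsum_ext _ _ (mul_mix IZR p q)).
  apply zsum_mix.
  - eapply summable_ext; [|exact (summable_quadratic p 0 1 0 Hp)]; intro k; cbv beta; ring.
  - eapply summable_ext; [|exact (summable_quadratic q 0 1 0 Hq)]; intro k; cbv beta; ring.
Qed.

Lemma variance_mix (p q : Z -> R) : l2_distribution p -> l2_distribution q ->
  variance (mix p q) = (variance p + variance q) / 2 + ((mean p - mean q) / 2) ^ 2.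
Proof.
  intros Hp Hq.
  rewrite !variance_moment2 by (try apply l2_distribution_mix; assumption).
  rewrite mean_mix by assumption.
  destruct Hp as (_ & _ & P2 & _), Hq as (_ & _ & Q2 & _).
  unfold moment2. rewrite (zsum_ext _ _ (mul_mix (fun k => IZR k ^ 2) p q)), zsum_mix by assumption.
  field.
Qed.

(** * Asymptotic densities *)

Definition count (P : nat -> bool) (N : nat) : nat := length (filter P (seq 0 N)).
Definition ratio (P : nat -> bool) (N : nat) : R := INR (count P N) / INR N.
Definition has_density (P : nat -> bool) (l : R) : Prop := is_lim_seq (ratio P) l.

Lemma density_unique (P : nat -> bool) (l : R) : has_density P l -> density P = l.
Proof.
  intro H. apply is_lim_seq_unique in H. unfold density. unfold ratio, count in H. now rewrite H.
Qed.

Lemma count_S (P : nat -> bool) (N : nat) :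
  count P (S N) = (count P N + Nat.b2n (P N))%nat.
Proof.
  unfold count. rewrite seq_S, filter_app, length_app. simpl. destruct (P N); reflexivity.
Qed.

Lemma count_le (P : nat -> bool) (N : nat) : (count P N <= N)%nat.
Proof. induction N; [apply Nat.le_0_l|]. rewrite count_S. destruct (P N); simpl; lia. Qed.

Lemma count_double (P : nat -> bool) (m : nat) :
  count P (2 * m) = (count (fun n => P (2 * n)%nat) m + count (fun n => P (2 * n + 1)%nat) m)%nat.
Proof.
  induction m as [|m IH]; [reflexivity|].
  replace (2 * S m)%nat with (S (S (2 * m))) by lia.
  rewrite !count_S, IH, Nat.add_1_r. lia.
Qed.

Lemma has_density_ext (P Q : nat -> bool) (l : R) :
  (forall n, P n = Q n) -> has_density P l -> has_density Q l.
Proof.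
  intro H. apply is_lim_seq_ext. intro N. unfold ratio, count. now rewrite (filter_ext _ _ H).
Qed.

Lemma has_density_const (b : bool) : has_density (fun _ => b) (if b then 1 else 0).
Proof.
  apply (is_lim_seq_ext_loc (fun _ => if b then 1 else 0)); [|apply is_lim_seq_const].
  exists 1%nat. intros N HN. unfold ratio.
  assert (Hc : count (fun _ => b) N = if b then N else 0%nat).
  { clear HN. induction N as [|N IH]; [destruct b; reflexivity|].
    rewrite count_S, IH. destruct b; simpl; lia. }
  assert (0 < INR N) by (apply lt_0_INR; lia).
  rewrite Hc. destruct b; simpl; field; lra.
Qed.

Lemma ratio_bounds (P : nat -> bool) (N : nat) : 0 <= ratio P N <= 1.
Proof.
  unfold ratio. destruct N as [|N]; [simpl; unfold Rdiv; rewrite Rinv_0; lra|].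
  pose proof (le_INR _ _ (count_le P (S N))). pose proof (pos_INR (count P (S N))).
  assert (0 < INR (S N)) by (apply lt_0_INR; lia).
  split; [apply Rdiv_le_0_compat; lra|].
  unfold Rdiv. rewrite <- (Rinv_r (INR (S N))) by lra.
  apply Rmult_le_compat_r; [left; apply Rinv_0_lt_compat|]; lra.
Qed.

Lemma has_density_bounds (P : nat -> bool) (l : R) : has_density P l -> 0 <= l <= 1.
Proof.
  intro H. split.
  - apply (is_lim_seq_le (fun _ => 0) (ratio P) 0 l); [|apply is_lim_seq_const|exact H].
    intro N. apply ratio_bounds.
  - apply (is_lim_seq_le (ratio P) (fun _ => 1) l 1); [|exact H|apply is_lim_seq_const].
    intro N. apply ratio_bounds.
Qed.

Lemma is_lim_seq_close (u v : nat -> R) (l : R) :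
  is_lim_seq u l -> (forall n, Rabs (v n - u n) <= / INR (S n)) -> is_lim_seq v l.
Proof.
  intros Hu Hclose.
  assert (Hinv : is_lim_seq (fun n => / INR (S n)) 0).
  { apply (is_lim_seq_incr_1 (fun n => / INR n)).
    exact (is_lim_seq_inv _ _ is_lim_seq_INR ltac:(discriminate)). }
  apply (is_lim_seq_le_le (fun n => u n - / INR (S n)) v (fun n => u n + / INR (S n))).
  - intro n. specialize (Hclose n). apply Rabs_le_between in Hclose. lra.
  - replace l with (l - 0) by ring. exact (is_lim_seq_minus' _ _ _ _ Hu Hinv).
  - replace l with (l + 0) by ring. exact (is_lim_seq_plus' _ _ _ _ Hu Hinv).
Qed.

Lemma is_lim_seq_even_odd (u : nat -> R) (l : R) :
  is_lim_seq (fun m => u (2 * m)%nat) l -> is_lim_seq (fun m => u (2 * m + 1)%nat) l ->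
  is_lim_seq u l.
Proof.
  intros He Ho. apply is_lim_seq_spec in He, Ho. apply is_lim_seq_spec.
  intro eps. destruct (He eps) as [N1 H1], (Ho eps) as [N2 H2].
  exists (2 * N1 + 2 * N2 + 1)%nat. intros n Hn.
  destruct (Nat.Even_or_Odd n) as [[m ->]|[m ->]]; [apply H1 | apply H2]; lia.
Qed.

Lemma add_ratio_close (c N e : R) : 0 <= c <= N -> 0 <= e <= 1 ->
  Rabs ((c + e) / (N + 1) - c / N) <= / (N + 1).
Proof.
  intros Hc He. destruct (Req_dec N 0) as [->|HN].
  (* c / 0 = 0 in Rocq *)
  - replace c with 0 by lra. unfold Rdiv. rewrite Rinv_0, !Rplus_0_l, Rinv_1.
    rewrite Rmult_0_l, Rmult_1_r, Rminus_0_r, Rabs_pos_eq; lra.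
  - replace ((c + e) / (N + 1) - c / N) with ((N * e - c) / (N * (N + 1))) by (field; lra).
    rewrite Rabs_div, (Rabs_pos_eq (N * (N + 1))) by nra.
    apply Rle_trans with (N / (N * (N + 1))).
    + apply Rmult_le_compat_r; [left; apply Rinv_0_lt_compat; nra|]. apply Rabs_le. nra.
    + right. field. lra.
Qed.

Lemma ratio_odd_close (P : nat -> bool) (m : nat) :
  Rabs (ratio P (2 * m + 1) - ratio P (2 * m)) <= / INR (S m).
Proof.
  unfold ratio. rewrite Nat.add_1_r, count_S, plus_INR, S_INR.
  eapply Rle_trans.
  - apply add_ratio_close; [split; [apply pos_INR | apply le_INR, count_le]|].
    destruct (P (2 * m)%nat); simpl; lra.
  - rewrite mult_INR, (S_INR m), S_INR, INR_1.
    pose proof (pos_INR m). apply Rinv_le_contravar; lra.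
Qed.

Lemma has_density_interleave (P : nat -> bool) (p q : R) :
  has_density (fun n => P (2 * n)%nat) p -> has_density (fun n => P (2 * n + 1)%nat) q ->
  has_density P ((p + q) / 2).
Proof.
  intros Hp Hq.
  assert (Heven : is_lim_seq (fun m => ratio P (2 * m)) ((p + q) / 2)).
  { apply (is_lim_seq_ext_loc (fun m => (ratio (fun n => P (2 * n)%nat) m
                                          + ratio (fun n => P (2 * n + 1)%nat) m) / 2)).
    - exists 1%nat. intros m Hm. unfold ratio. rewrite count_double, plus_INR, mult_INR.
      assert (0 < INR m) by (apply lt_0_INR; lia). simpl. field. lra.
    - apply is_lim_seq_div'; [apply is_lim_seq_plus'; assumption | apply is_lim_seq_const |].
      discrR. }
  apply is_lim_seq_even_odd; [exact Heven|].
  exact (is_lim_seq_close _ _ _ Heven (ratio_odd_close P)).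
Qed.

(** * The recursion for a_t and b_t *)

Definition hit (t : nat) (f : bool) (k : Z) (n : nat) : bool := Z.eqb (d t (2 * n + Nat.b2n f)) k.
Definition dist (t : nat) (f : bool) (k : Z) : R := density (hit t f k).
(* With t = 2s + e, n = 2m + g, s' = s + [e && f] and o the parity of s',
   d(t, 2n + f) - d(s', n) = offset e f g o. *)
Definition offset (e f g o : bool) : Z := (Z.b2z (xorb e f && xorb g o) - Z.b2z (f && g))%Z.
Definition dirac0 (k : Z) : R := if Z.eqb 0 k then 1 else 0.

Lemma a_dist (t : nat) : a t = dist t false.
Proof.
  apply functional_extensionality. intro k. unfold a, dist, hit. f_equal.
  apply functional_extensionality. intro n. now rewrite Nat.add_0_r.
Qed.

Lemma b_dist (t : nat) : b t = dist t true.
Proof. reflexivity. Qed.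

Lemma odd_double_add (m : nat) (g : bool) : Nat.odd (2 * m + Nat.b2n g) = g.
Proof. rewrite Nat.add_comm, Nat.odd_add_mul_2. now destruct g. Qed.

Lemma Z_eqb_add_r (x c k : Z) : Z.eqb (x + c) k = Z.eqb x (k - c).
Proof. destruct (Z.eqb_spec (x + c) k), (Z.eqb_spec x (k - c)); lia. Qed.

Lemma hit_double_add (s : nat) (e f g : bool) (k : Z) (m : nat) :
  hit (2 * s + Nat.b2n e) f k (2 * m + Nat.b2n g)
  = hit (s + Nat.b2n (e && f)) g (k - offset e f g (Nat.odd (s + Nat.b2n (e && f)))) m.
Proof.
  unfold hit, offset.
  rewrite d_double_add, Nat.odd_add, !odd_double_add, <- Z.add_sub_assoc. apply Z_eqb_add_r.
Qed.

Lemma has_density_hit_double_add (s : nat) (e f : bool) (k : Z) (p q : R) :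
  let s' := (s + Nat.b2n (e && f))%nat in
  has_density (hit s' false (k - offset e f false (Nat.odd s'))) p ->
  has_density (hit s' true (k - offset e f true (Nat.odd s'))) q ->
  has_density (hit (2 * s + Nat.b2n e) f k) ((p + q) / 2).
Proof.
  intros s' Hp Hq. apply has_density_interleave.
  - eapply has_density_ext; [|exact Hp]. intro m.
    rewrite <- (Nat.add_0_r (2 * m)). symmetry. apply (hit_double_add s e f false).
  - eapply has_density_ext; [|exact Hq]. intro m.
    symmetry. apply (hit_double_add s e f true).
Qed.

Lemma hit_zero (f : bool) (k : Z) (n : nat) : hit 0 f k n = Z.eqb 0 k.
Proof. unfold hit, d. now rewrite Nat.add_0_r, Z.sub_diag. Qed.

Lemma d_one_le (n : nat) : (d 1 n <= 1)%Z.
Proof.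
  induction n as [n IH] using (well_founded_induction lt_wf).
  destruct (Nat.exists_div2 n) as (m & g & ->).
  change 1%nat with (2 * 0 + Nat.b2n true)%nat at 1. rewrite d_double_add.
  destruct g; cbn [Nat.b2n andb xorb Z.b2z].
  - destruct (Nat.eq_dec m 0) as [->|Hm]; [unfold d, r; simpl; lia|].
    specialize (IH m ltac:(simpl; lia)). destruct (Nat.odd m); simpl; lia.
  - unfold d. rewrite !Nat.add_0_r, Z.sub_diag. destruct (Nat.odd m); simpl; lia.
Qed.

Lemma hit_one_true_large (k : Z) (n : nat) : (2 <= k)%Z -> hit 1 true k n = false.
Proof.
  intro Hk. unfold hit. pose proof (d_one_le (2 * n + Nat.b2n true)).
  apply Z.eqb_neq. lia.
Qed.

Lemma hit_has_density_one_false (k : Z) : exists l, has_density (hit 1 false k) l.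
Proof.
  eexists. apply (has_density_hit_double_add 0 true false);
    eapply has_density_ext; [intro n; symmetry; apply hit_zero| apply has_density_const
                            |intro n; symmetry; apply hit_zero| apply has_density_const].
Qed.

Lemma hit_has_density_one_true (k : Z) : exists l, has_density (hit 1 true k) l.
Proof.
  remember (Z.to_nat (2 - k)) as j eqn:Hj. revert k Hj.
  induction j as [|j IH]; intros k Hj.
  - exists 0. apply (has_density_ext (fun _ => false)); [|apply (has_density_const false)].
    intro n. symmetry. apply hit_one_true_large. lia.
  - destruct (hit_has_density_one_false k) as [p Hp].
    destruct (IH (k + 1)%Z ltac:(lia)) as [q Hq].
    exists ((p + q) / 2). apply (has_density_hit_double_add 0 true true).
    + eapply has_density_ext; [|exact Hp]. intro n. cbn -[hit]. now rewrite Z.sub_0_r.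
    + eapply has_density_ext; [|exact Hq]. intro n. cbn -[hit]. f_equal.
Qed.

Lemma hit_has_density (t : nat) (f : bool) (k : Z) : exists l, has_density (hit t f k) l.
Proof.
  revert f k. induction t as [t IH] using (well_founded_induction lt_wf). intros f k.
  destruct (Nat.exists_div2 t) as (s & e & ->).
  destruct (Nat.eq_dec s 0) as [->|Hs].
  - destruct e; [destruct f; [apply hit_has_density_one_true | apply hit_has_density_one_false]|].
    exists (if Z.eqb 0 k then 1 else 0).
    eapply has_density_ext; [|apply has_density_const]. intro n. symmetry. apply hit_zero.
  - set (s' := (s + Nat.b2n (e && f))%nat).
    assert (Hlt : (s' < 2 * s + Nat.b2n e)%nat) by (unfold s'; destruct e, f; simpl; lia).
    destruct (IH s' Hlt false (k - offset e f false (Nat.odd s'))%Z) as [p Hp].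
    destruct (IH s' Hlt true (k - offset e f true (Nat.odd s'))%Z) as [q Hq].
    exists ((p + q) / 2). exact (has_density_hit_double_add s e f k p q Hp Hq).
Qed.

Lemma dist_has_density (t : nat) (f : bool) (k : Z) : has_density (hit t f k) (dist t f k).
Proof.
  destruct (hit_has_density t f k) as [l H]. unfold dist. now rewrite (density_unique _ _ H).
Qed.

Lemma dist_double_add (s : nat) (e f : bool) :
  let s' := (s + Nat.b2n (e && f))%nat in
  dist (2 * s + Nat.b2n e) f
  = mix (shift (offset e f false (Nat.odd s')) (dist s' false))
        (shift (offset e f true (Nat.odd s')) (dist s' true)).
Proof.
  intro s'. apply functional_extensionality. intro k. apply density_unique.
  apply has_density_hit_double_add; apply dist_has_density.
Qed.

Lemma dist_zero (f : bool) : dist 0 f = dirac0.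
Proof.
  apply functional_extensionality. intro k. apply density_unique.
  eapply has_density_ext; [|apply has_density_const]. intro n. symmetry. apply hit_zero.
Qed.

Lemma dist_bounds (t : nat) (f : bool) (k : Z) : 0 <= dist t f k <= 1.
Proof. exact (has_density_bounds _ _ (dist_has_density t f k)). Qed.

Lemma dist_one_true_large (k : Z) : (2 <= k)%Z -> dist 1 true k = 0.
Proof.
  intro Hk. apply density_unique.
  apply (has_density_ext (fun _ => false)); [|apply (has_density_const false)].
  intro n. symmetry. now apply hit_one_true_large.
Qed.

(** * The distributions a_0, a_1 and b_1 *)

Lemma dirac0_pow (n : nat) : dirac0 (Z.of_nat n) = 0 ^ n /\ dirac0 (- Z.of_nat n)%Z = 0 ^ n.
Proof. unfold dirac0. destruct n; simpl; split; ring. Qed.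

Lemma mul_dirac0 (g : Z -> R) (k : Z) : g 0%Z = 0 -> g k * dirac0 k = 0 * dirac0 k.
Proof. intro H. unfold dirac0. destruct (Z.eqb_spec 0 k) as [<-|]; [rewrite H|]; ring. Qed.

Lemma l2_distribution_dirac0 : l2_distribution dirac0.
Proof.
  assert (Hgeom : Rabs 0 < 1) by (rewrite Rabs_R0; lra).
  assert (Hs : summable dirac0).
  { split; eapply ex_series_ext; try exact (ex_series_geom 0 Hgeom);
      intro n; symmetry; apply dirac0_pow. }
  split; [intro k; unfold dirac0; destruct (Z.eqb 0 k); lra|].
  split; [exact Hs|]. split.
  - eapply summable_ext; [|exact (summable_scal 0 _ Hs)].
    intro k. symmetry. apply (mul_dirac0 (fun k => IZR k ^ 2)). simpl. ring.
  - rewrite zsum_split by exact Hs.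
    rewrite (Series_ext (fun n => dirac0 (Z.of_nat n)) (fun n => 0 ^ n)),
      (Series_ext (fun n => dirac0 (- Z.of_nat n)) (fun n => 0 ^ n)) by (intro n; apply dirac0_pow).
    rewrite Series_geom by exact Hgeom. unfold dirac0. simpl. field.
Qed.

Lemma mean_dirac0 : mean dirac0 = 0.
Proof.
  unfold mean. rewrite (zsum_ext _ (fun k => 0 * dirac0 k))
    by (intro k; apply (mul_dirac0 IZR); reflexivity).
  rewrite zsum_scal. ring.
Qed.

Lemma variance_dirac0 : variance dirac0 = 0.
Proof.
  unfold variance. rewrite mean_dirac0.
  rewrite (zsum_ext _ (fun k => 0 * dirac0 k))
    by (intro k; apply (mul_dirac0 (fun k => (IZR k - 0) ^ 2)); simpl; ring).
  rewrite zsum_scal. ring.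
Qed.

Lemma dist_one_false_eq : dist 1 false = mix (shift 0 dirac0) (shift 1 dirac0).
Proof.
  pose proof (dist_double_add 0 true false) as H. cbn [Nat.b2n andb Nat.add Nat.mul] in H.
  rewrite !dist_zero in H. exact H.
Qed.

Lemma dist_one_true_eq : dist 1 true = mix (shift 0 (dist 1 false)) (shift (-1) (dist 1 true)).
Proof. exact (dist_double_add 0 true true). Qed.

Lemma dist_one_false_neg (k : Z) : (k < 0)%Z -> dist 1 false k = 0.
Proof.
  intro Hk. rewrite dist_one_false_eq. unfold mix, shift, dirac0.
  destruct (Z.eqb_spec 0 (k - 0)), (Z.eqb_spec 0 (k - 1)); lia || lra.
Qed.

Lemma dist_one_true_le (k : Z) : dist 1 true k <= 2 * (1 / 2) ^ Z.abs_nat k.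
Proof.
  assert (Hneg : forall n, dist 1 true (- Z.of_nat n) <= (1 / 2) ^ n).
  { induction n as [|n IH]; [simpl; apply dist_bounds|].
    rewrite dist_one_true_eq. unfold mix, shift.
    rewrite dist_one_false_neg by lia.
    replace (- Z.of_nat (S n) - -1)%Z with (- Z.of_nat n)%Z by lia.
    simpl. lra. }
  assert (Hpow : 0 < (1 / 2) ^ Z.abs_nat k) by (apply pow_lt; lra).
  destruct (Z_lt_le_dec k 2) as [Hk|Hk]; [|rewrite dist_one_true_large by lia; lra].
  destruct (Z_lt_le_dec k 1) as [Hk1|Hk1].
  - replace k with (- Z.of_nat (Z.abs_nat k))%Z at 1 by lia. specialize (Hneg (Z.abs_nat k)). lra.
  - replace k with 1%Z by lia. pose proof (dist_bounds 1 true 1). simpl. lra.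
Qed.

Definition weight (n : nat) : R := 2 * (INR n + 1) ^ 2 * (1 / 2) ^ n.

Lemma weight_pos (n : nat) : 0 < weight n.
Proof. unfold weight. pose proof (pos_INR n). pose proof (pow_lt (1 / 2) n ltac:(lra)). nra. Qed.

Lemma ex_series_weight : ex_series weight.
Proof.
  apply ex_series_Rabs. apply (ex_series_DAlembert weight (1 / 2)); [lra| |].
  - intro n. pose proof (weight_pos n). lra.
  - apply (is_lim_seq_ext (fun n => (1 + / INR (S n)) * (1 + / INR (S n)) * / 2)).
    + intro n. pose proof (weight_pos n). pose proof (weight_pos (S n)).
      rewrite Rabs_pos_eq by (apply Rlt_le, Rdiv_lt_0_compat; assumption).
      unfold weight. rewrite !S_INR. simpl pow.
      pose proof (pos_INR n). field. split; [apply pow_nonzero|]; lra.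
    + assert (Hinv : is_lim_seq (fun n => / INR (S n)) 0).
      { apply (is_lim_seq_incr_1 (fun n => / INR n)).
        exact (is_lim_seq_inv _ _ is_lim_seq_INR ltac:(discriminate)). }
      assert (H1 : is_lim_seq (fun n => 1 + / INR (S n)) (1 + 0))
        by (apply is_lim_seq_plus'; [apply is_lim_seq_const | exact Hinv]).
      replace (1 / 2) with ((1 + 0) * (1 + 0) * / 2) by field.
      apply is_lim_seq_mult'; [apply is_lim_seq_mult'; exact H1 | apply is_lim_seq_const].
Qed.

Lemma summable_weighted (f : Z -> R) :
  (forall k, Rabs (f k) <= weight (Z.abs_nat k)) -> summable f.
Proof.
  intro H. apply (summable_dominated f (fun k => weight (Z.abs_nat k))); [exact H|].
  split; eapply ex_series_ext; try exact ex_series_weight; intro n; f_equal; lia.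
Qed.

Lemma l2_distribution_dist_one_true :
  l2_distribution (dist 1 false) -> l2_distribution (dist 1 true).
Proof.
  intros (_ & Ha0 & _ & Hamass).
  assert (Hbound : forall k, dist 1 true k <= 2 * (1 / 2) ^ Z.abs_nat k) by apply dist_one_true_le.
  assert (Hsum : summable (dist 1 true)).
  { apply summable_weighted. intro k.
    rewrite Rabs_pos_eq by apply dist_bounds. eapply Rle_trans; [apply Hbound|].
    unfold weight. pose proof (pos_INR (Z.abs_nat k)).
    pose proof (pow_lt (1 / 2) (Z.abs_nat k) ltac:(lra)). nra. }
  split; [intro k; apply dist_bounds|]. split; [exact Hsum|]. split.
  - apply summable_weighted. intro k.
    rewrite Rabs_mult, (Rabs_pos_eq (dist 1 true k)) by apply dist_bounds.
    rewrite <- RPow_abs, Rabs_Zabs, <- Zabs2Nat.id_abs, <- INR_IZR_INZ.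
    pose proof (Hbound k). pose proof (dist_bounds 1 true k). pose proof (pos_INR (Z.abs_nat k)).
    pose proof (pow_lt (1 / 2) (Z.abs_nat k) ltac:(lra)). unfold weight. nra.
  - assert (Hshift0 := zsum_shift 0 (dist 1 false) Ha0).
    assert (Hshift1 := zsum_shift (-1) (dist 1 true) Hsum).
    assert (Hself : zsum (dist 1 true) = (zsum (dist 1 false) + zsum (dist 1 true)) / 2).
    { rewrite dist_one_true_eq at 1. rewrite zsum_mix by (apply Hshift0 || apply Hshift1).
      unfold shift. now rewrite (proj2 Hshift0), (proj2 Hshift1). }
    lra.
Qed.

Definition mean_value (u : nat) (f : bool) : R :=
  if Nat.odd u then (if f then - (1 / 2) else 1 / 2) else 0.

Lemma mean_dist_one_true :
  l2_distribution (dist 1 false) -> mean (dist 1 false) = 1 / 2 -> mean (dist 1 true) = - (1 / 2).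
Proof.
  intros Ha Hmean. pose proof (l2_distribution_dist_one_true Ha) as Hb.
  assert (Hself : mean (dist 1 true)
                  = (mean (dist 1 false) + IZR 0 + (mean (dist 1 true) + IZR (-1))) / 2).
  { rewrite dist_one_true_eq at 1.
    rewrite mean_mix, !mean_shift by (try apply l2_distribution_shift; assumption). reflexivity. }
  simpl IZR in Hself. lra.
Qed.

Lemma l2_mean_dist_double_add (s : nat) (e f : bool) :
  let s' := (s + Nat.b2n (e && f))%nat in
  (forall g, l2_distribution (dist s' g) /\ mean (dist s' g) = mean_value s' g) ->
  l2_distribution (dist (2 * s + Nat.b2n e) f) /\
  mean (dist (2 * s + Nat.b2n e) f) = mean_value (2 * s + Nat.b2n e) f.
Proof.
  intros s' H. destruct (H false) as [H0 M0], (H true) as [H1 M1].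
  rewrite dist_double_add. fold s'.
  split; [apply l2_distribution_mix; apply l2_distribution_shift; assumption|].
  rewrite mean_mix, !mean_shift, M0, M1 by (try apply l2_distribution_shift; assumption).
  unfold mean_value, offset. rewrite odd_double_add.
  destruct (Nat.odd s'), e, f; simpl; lra.
Qed.

Lemma l2_mean_dist (u : nat) (f : bool) :
  l2_distribution (dist u f) /\ mean (dist u f) = mean_value u f.
Proof.
  revert f. induction u as [u IH] using (well_founded_induction lt_wf). intro f.
  destruct (Nat.exists_div2 u) as (s & e & ->).
  destruct (Nat.eq_dec s 0) as [->|Hs].
  - destruct e.
    + assert (H1 := l2_mean_dist_double_add 0 true false (fun g => IH 0%nat ltac:(simpl; lia) g)).
      destruct f; [|exact H1]. destruct H1 as [Hl2 Hmean].
      split; [apply l2_distribution_dist_one_true | apply mean_dist_one_true]; assumption.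
    + rewrite dist_zero. split; [apply l2_distribution_dirac0 | apply mean_dirac0].
  - apply l2_mean_dist_double_add. intro g. apply IH. destruct e, f; simpl; lia.
Qed.

Lemma variance_dist_rec (u s s' : nat) (e f : bool) :
  u = (2 * s + Nat.b2n e)%nat -> s' = (s + Nat.b2n (e && f))%nat ->
  variance (dist u f) = (variance (dist s' false) + variance (dist s' true)) / 2
    + (mean_value s' false
       + IZR (offset e f false (Nat.odd s') - offset e f true (Nat.odd s')) / 2) ^ 2.
Proof.
  intros -> ->. set (s' := (s + Nat.b2n (e && f))%nat).
  destruct (l2_mean_dist s' false) as [H0 M0], (l2_mean_dist s' true) as [H1 M1].
  rewrite dist_double_add. fold s'.
  rewrite variance_mix, !variance_shift, !mean_shift, M0, M1
    by (try apply l2_distribution_shift; assumption).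
  rewrite minus_IZR. unfold mean_value. destruct (Nat.odd s'); field.
Qed.

Lemma m_alpha_value (u : nat) : m_alpha u = mean_value u false.
Proof. unfold m_alpha. rewrite a_dist. apply l2_mean_dist. Qed.

Lemma m_beta_value (u : nat) : m_beta u = mean_value u true.
Proof. unfold m_beta. rewrite b_dist. apply l2_mean_dist. Qed.

Lemma v_alpha_variance (u : nat) : v_alpha u = variance (dist u false).
Proof. unfold v_alpha, m_alpha. now rewrite a_dist. Qed.

Lemma v_beta_variance (u : nat) : v_beta u = variance (dist u true).
Proof. unfold v_beta, m_beta. now rewrite b_dist. Qed.

Lemma IZR_b2z (b : bool) : IZR (Z.b2z b) = if b then 1 else 0.
Proof. now destruct b. Qed.

Ltac solve_variance_rec s s' e f :=
  rewrite !v_alpha_variance, !v_beta_variance;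
  rewrite (variance_dist_rec _ s s' e f) by (cbn [Nat.b2n andb]; lia);
  unfold mean_value, offset;
  try (rewrite Nat.add_1_r, Nat.odd_succ, <- Nat.negb_odd);
  rewrite !minus_IZR, !IZR_b2z;
  destruct (Nat.odd s); cbn [negb andb xorb]; field.

Lemma v_alpha_double (s : nat) :
  v_alpha (2 * s) = (v_alpha s + v_beta s) / 2 + (if Nat.odd s then 1 / 4 else 0).
Proof. solve_variance_rec s s false false. Qed.

Lemma v_beta_double (s : nat) :
  v_beta (2 * s) = (v_alpha s + v_beta s) / 2 + (if Nat.odd s then 9 / 4 else 0).
Proof. solve_variance_rec s s false true. Qed.

Lemma v_alpha_succ_double (s : nat) :
  v_alpha (2 * s + 1) = (v_alpha s + v_beta s) / 2 + (if Nat.odd s then 1 else 1 / 4).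
Proof. solve_variance_rec s s true false. Qed.

Lemma v_beta_succ_double (s : nat) :
  v_beta (2 * s + 1) = (v_alpha (s + 1) + v_beta (s + 1)) / 2 + (if Nat.odd s then 1 / 4 else 1).
Proof. solve_variance_rec s (s + 1)%nat true true. Qed.

Lemma odd_double_plus (t n : nat) : Nat.odd (2 * t + n) = Nat.odd n.
Proof. rewrite Nat.add_comm. apply Nat.odd_add_mul_2. Qed.

Ltac unfold_vectors :=
  unfold Mvec, Vvec, mv, Mat0, Mat1, vec6; cbn [sum_f_R0 Nat.ltb Nat.leb Nat.eqb orb].

Lemma Mvec_value (t i : nat) : (i < 6)%nat -> Mvec t i = vec6 0 0 (1 / 2) (-1 / 2) 0 0 i.
Proof.
  intro Hi. destruct i as [|[|[|[|[|[|i]]]]]]; [..|lia]; unfold_vectors;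
    rewrite ?m_alpha_value, ?m_beta_value; unfold mean_value;
    rewrite ?Nat.odd_even, ?odd_double_plus; cbn [Nat.odd Nat.even negb]; lra.
Qed.

Lemma Vvec_double (t i : nat) : (i < 6)%nat ->
  Vvec (2 * t) i = (1 / 2) * mv Mat0 (Vvec t) i + (1 / 4) * vec6 0 0 1 4 1 9 i.
Proof.
  intro Hi. destruct i as [|[|[|[|[|[|i]]]]]]; [..|lia]; unfold_vectors.
  - rewrite v_alpha_double, Nat.odd_even. lra.
  - rewrite v_beta_double, Nat.odd_even. lra.
  - rewrite v_alpha_succ_double, Nat.odd_even. lra.
  - rewrite v_beta_succ_double, Nat.odd_even. lra.
  - replace (2 * (2 * t) + 2)%nat with (2 * (2 * t + 1))%nat by lia.
    rewrite v_alpha_double, odd_double_plus. simpl. lra.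
  - replace (2 * (2 * t) + 2)%nat with (2 * (2 * t + 1))%nat by lia.
    rewrite v_beta_double, odd_double_plus. simpl. lra.
Qed.

Lemma Vvec_succ_double (t i : nat) : (i < 6)%nat ->
  Vvec (2 * t + 1) i = (1 / 2) * mv Mat1 (Vvec t) i + (1 / 4) * vec6 1 9 4 1 0 0 i.
Proof.
  intro Hi. destruct i as [|[|[|[|[|[|i]]]]]]; [..|lia]; unfold_vectors.
  - rewrite v_alpha_double, odd_double_plus. simpl. lra.
  - rewrite v_beta_double, odd_double_plus. simpl. lra.
  - rewrite v_alpha_succ_double, odd_double_plus. simpl. lra.
  - rewrite v_beta_succ_double, odd_double_plus, <- Nat.add_assoc. simpl. lra.
  - replace (2 * (2 * t + 1) + 2)%nat with (2 * (2 * t + 2))%nat by lia.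
    rewrite v_alpha_double, odd_double_plus. simpl. lra.
  - replace (2 * (2 * t + 1) + 2)%nat with (2 * (2 * t + 2))%nat by lia.
    rewrite v_beta_double, odd_double_plus. simpl. lra.
Qed.

Lemma Vvec_zero (i : nat) : (i < 6)%nat -> Vvec 0 i = (1 / 4) * vec6 0 0 1 9 6 14 i.
Proof.
  assert (Ha0 : v_alpha 0 = 0) by (rewrite v_alpha_variance, dist_zero; apply variance_dirac0).
  assert (Hb0 : v_beta 0 = 0) by (rewrite v_beta_variance, dist_zero; apply variance_dirac0).
  assert (Ha1 : v_alpha 1 = 1 / 4) by (pose proof (v_alpha_succ_double 0) as H; simpl in H; lra).
  assert (Hb1 : v_beta 1 = 9 / 4) by (pose proof (v_beta_succ_double 0) as H; simpl in H; lra).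
  assert (Ha2 : v_alpha 2 = 6 / 4) by (pose proof (v_alpha_double 1) as H; simpl in H; lra).
  assert (Hb2 : v_beta 2 = 14 / 4) by (pose proof (v_beta_double 1) as H; simpl in H; lra).
  intro Hi. destruct i as [|[|[|[|[|[|i]]]]]]; [..|lia]; unfold_vectors; simpl; lra.
Qed.

Theorem proposition3p4 :
  (forall t : nat, forall i : nat, (i < 6)%nat ->
     Mvec t i = vec6 0 0 (1/2) (-1/2) 0 0 i) /\
  (forall t : nat, forall i : nat, (i < 6)%nat ->
     Vvec (2 * t) i = (1/2) * mv Mat0 (Vvec t) i + (1/4) * vec6 0 0 1 4 1 9 i) /\
  (forall t : nat, forall i : nat, (i < 6)%nat ->
     Vvec (2 * t + 1) i = (1/2) * mv Mat1 (Vvec t) i + (1/4) * vec6 1 9 4 1 0 0 i) /\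
  (forall i : nat, (i < 6)%nat -> Vvec 0 i = (1/4) * vec6 0 0 1 9 6 14 i).
Proof.
  split; [exact Mvec_value|].
  split; [exact Vvec_double|].
  split; [exact Vvec_succ_double | exact Vvec_zero].
Qed.
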